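(* Let $(F,C,(u_f)_{f\in F},d,k)$ be an instance of Capacitated $k$-Median. Let $A\subseteq F$ be a set of at most $\ell$ facilities (a solution to Uncapacitated $k$-Median opening at most $\ell\ge k$ facilities), and let $\mathrm{cost}_d(A)=\sum_{c\in C}\min_{f\in A} d(c,f)$. Construct the $\ell$-centered metric $d_\ell$ from $A$ as follows: for each $f\in A$ create a new point $s^f$ (a center) with $d(s^f,f)=0$, extending $d$ naturally to $F\cup C\cup S$ where $S=\{s^f: f\in A\}$; build a weighted graph on $F\cup C\cup S$ consisting of a complete graph on $S$ with edge lengths given by $d$, and, for every $v\in F\cup C$, a single edge from $v$ to a center $s^v\in S$ closest to $v$ (with respect to the extended $d$), of length $d(v,s^v)$; let $d_\ell$ be the shortest-path metric of this graph. Let $\phi^*$ be the assignment of an optimal solution of the Capacitated $k$-Median instance with metric $d$, and for a metric $d'$ write $\mathrm{cost}(\phi^*,d')=\sum_{c\in C}d'(c,\phi^*(c))$. Then $$\mathrm{cost}(\phi^*,d)\le \mathrm{cost}(\phi^*,d_\ell)\le 3\,\mathrm{cost}(\phi^*,d)+4\,\mathrm{cost}_d(A).$$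
   Context: Capacitated $k$-Median: given facilities $F$ with capacities $u_f\in\mathbb{Z}_{\ge0}$, clients $C$, a metric $d$ on $F\cup C$ and an integer $k$; a feasible solution is a set of at most $k$ open facilities and an assignment $\phi$ of clients to open facilities with at most $u_f$ clients assigned to each open $f$; the cost is $\sum_{c}d(c,\phi(c))$, to be minimized. *)

From HB Require Import structures.
From mathcomp Require Import all_boot all_order all_algebra.
From mathcomp Require Import boolp classical_sets reals.
Set Implicit Arguments. Unset Strict Implicit. Unset Printing Implicit Defensive.
Import Order.TTheory GRing.Theory Num.Theory.
Local Open Scope ring_scope.
Local Open Scope classical_set_scope.

Definition is_metric (R : realType) (P : Type) (d : P -> P -> R) : Prop :=
  (forall x, d x x = 0) /\ (forall x y, d x y = d y x) /\
  (forall x y z, d x z <= d x y + d y z).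

Definition pt (F C : finType) := (F + C)%type.

Definition ckm_feasible (F C : finType) (u : F -> nat) (k : nat)
  (X : {set F}) (phi : C -> F) : Prop :=
  [/\ (#|X| <= k)%N, (forall c, phi c \in X) &
      (forall f, (#|[set c | phi c == f]| <= u f)%N)].

Definition asg_cost (R : realType) (F C : finType) (d : pt F C -> pt F C -> R)
  (phi : C -> F) : R := \sum_(c : C) d (inr c) (inl (phi c)).

Definition ckm_optimal (R : realType) (F C : finType) (d : pt F C -> pt F C -> R)
  (u : F -> nat) (k : nat) (X : {set F}) (phi : C -> F) : Prop :=
  ckm_feasible u k X phi /\
  forall X' phi', ckm_feasible u k X' phi' -> asg_cost d phi <= asg_cost d phi'.

Definition dist_to (R : realType) (F C : finType) (d : pt F C -> pt F C -> R)
  (A : {set F}) (p : pt F C) : R :=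
  inf [set d p (inl f) | f in [set f | f \in A]].

Definition costA (R : realType) (F C : finType) (d : pt F C -> pt F C -> R)
  (A : {set F}) : R := \sum_(c : C) dist_to d A (inr c).

Definition center (F : finType) (A : {set F}) := {f : F | f \in A}.

Definition vtx (F C : finType) (A : {set F}) := (pt F C + center A)%type.

Section Graph.
Variables (R : realType) (F C : finType) (d : pt F C -> pt F C -> R)
  (A : {set F}) (sigma : pt F C -> center A).
(* sigma v : a closest center s^v to v. *)

Definition gedge (x y : vtx C A) : bool :=
  match x, y with
  | inr s, inr t => s != t
  | inl v, inr s => s == sigma v
  | inr s, inl v => s == sigma v
  | inl _, inl _ => false
  end.

(* Edge lengths, given by the extension of d with d(s^f, .) = d(f, .). *)
Definition glen (x y : vtx C A) : R :=
  match x, y with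
  | inr s, inr t => d (inl (val s)) (inl (val t))
  | inl v, inr s => d v (inl (val s))
  | inr s, inl v => d v (inl (val s))
  | inl _, inl _ => 0
  end.

Fixpoint wlen (x : vtx C A) (p : seq (vtx C A)) : R :=
  match p with
  | [::] => 0
  | y :: q => glen x y + wlen y q
  end.

Definition spdist (x y : vtx C A) : R :=
  inf [set wlen x p | p in [set p | path gedge x p && (last x p == y)]].

Definition d_ell (v w : pt F C) : R := spdist (inl v) (inl w).
End Graph.

Definition closest_center (R : realType) (F C : finType)
  (d : pt F C -> pt F C -> R) (A : {set F}) (sigma : pt F C -> center A) : Prop :=
  forall v f, f \in A -> d v (inl (val (sigma v))) <= d v (inl f).

(* Every edge of the graph is as long as the d-distance between the points it
   joins (a center s^f standing for f), so by the triangle inequality every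
   walk is at least as long as the d-distance between its ends: d <= d_ell.
   Conversely v, s^v, s^w, w is a walk, so
   d_ell(v, w) <= d(v, s^v) + d(s^v, s^w) + d(s^w, w); as s^w is a center
   closest to w, the triangle inequality bounds this by
   3 d(v, w) + 4 d(v, s^v).  Summing over the clients, with w = phi(c) and
   d(c, s^c) = min_{f in A} d(c, f), gives the upper bound. *)

From HB Require Import structures.
From mathcomp Require Import all_boot all_order all_algebra.
From mathcomp Require Import boolp classical_sets reals.
From mathcomp Require Import lra.
Import Order.TTheory GRing.Theory Num.Theory.
Local Open Scope ring_scope.
Local Open Scope classical_set_scope.

Section CenteredMetric.
Set Implicit Arguments.
Unset Strict Implicit.

Variables (R : realType) (F C : finType) (d : pt F C -> pt F C -> R)
  (A : {set F}) (sigma : pt F C -> center A).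
Hypothesis d_metric : is_metric d.

Let dxx : forall x, d x x = 0. Proof. by case: d_metric. Qed.
Let dC : forall x y, d x y = d y x. Proof. by case: d_metric => _ []. Qed.
Let d_triangle : forall x y z, d x z <= d x y + d y z.
Proof. by case: d_metric => _ []. Qed.

Lemma metric_ge0 x y : 0 <= d x y.
Proof.
have := d_triangle x y x; rewrite dxx (dC y x) => h.
by rewrite -(@pmulr_rge0 _ 2) // mulr2n mulrDl !mul1r.
Qed.

Definition vtx_pt (x : vtx C A) : pt F C :=
  match x with inl v => v | inr s => inl (val s) end.

Definition center_pt (v : pt F C) : pt F C := inl (val (sigma v)).

Lemma glen_edge x y : gedge sigma x y -> glen d x y = d (vtx_pt x) (vtx_pt y).
Proof. by case: x => [v|s]; case: y => [w|t] //= _; rewrite dC. Qed.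

Lemma dist_le_wlen x p : path (gedge sigma) x p ->
  d (vtx_pt x) (vtx_pt (last x p)) <= wlen d x p.
Proof.
elim: p x => [|y p IHp] x /=; first by rewrite dxx.
move=> /andP[exy yp]; rewrite glen_edge //.
by apply: le_trans (d_triangle _ (vtx_pt y) _) _; rewrite lerD2l; apply: IHp.
Qed.

Lemma walk_lengths_lbound x y : has_lbound
  [set wlen d x p | p in [set p | path (gedge sigma) x p && (last x p == y)]].
Proof.
exists 0 => _ [p /andP[xp _] <-].
exact: le_trans (metric_ge0 _ _) (dist_le_wlen xp).
Qed.

Lemma walk_via_centers v w : exists2 p,
  path (gedge sigma) (inl v) p && (last (inl v) p == inl w) &
  wlen d (inl v) p =
    d v (center_pt v) + d (center_pt v) (center_pt w) + d w (center_pt w).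
Proof.
have [e|ne] := eqVneq (sigma v) (sigma w).
- exists [:: inr (sigma v); inl w]; first by rewrite /= e !eqxx.
  by rewrite /= /center_pt e dxx !addr0.
- exists [:: inr (sigma v); inr (sigma w); inl w]; first by rewrite /= ne !eqxx.
  by rewrite /= addr0 addrA.
Qed.

Lemma d_ell_le_via_centers v w : d_ell d sigma v w <=
  d v (center_pt v) + d (center_pt v) (center_pt w) + d w (center_pt w).
Proof.
have [p vwp <-] := walk_via_centers v w.
by apply: ge_inf; [exact: walk_lengths_lbound | exists p].
Qed.

Lemma le_d_ell v w : d v w <= d_ell d sigma v w.
Proof.
apply: lb_le_inf.
  by have [p vwp _] := walk_via_centers v w; exists (wlen d (inl v) p), p.
by move=> _ [p /andP[vp /eqP vw] <-]; have := dist_le_wlen vp; rewrite vw.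
Qed.

Hypothesis sigma_closest : closest_center d sigma.

Lemma center_dist_le_dist_to v : d v (center_pt v) <= dist_to d A v.
Proof.
apply: lb_le_inf; last by move=> _ [f fA <-]; apply: sigma_closest.
by exists (d v (center_pt v)), (val (sigma v)) => //=; apply: valP.
Qed.

Lemma d_ell_le v w : d_ell d sigma v w <= 3 * d v w + 4 * d v (center_pt v).
Proof.
apply: le_trans (d_ell_le_via_centers v w) _.
have centers_le : d (center_pt v) (center_pt w) <=
    d (center_pt v) v + d v w + d w (center_pt w).
  by apply: le_trans (d_triangle _ w _) _; rewrite lerD2r d_triangle.
have closest_w : d w (center_pt w) <= d w v + d v (center_pt v).
  by apply: le_trans (d_triangle _ v _); apply: sigma_closest; apply: valP.
move: centers_le closest_w; rewrite (dC (center_pt v) v) (dC w v); lra.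
Qed.

End CenteredMetric.

Theorem lemma2 (R : realType) (F C : finType) (u : F -> nat)
  (d : pt F C -> pt F C -> R) (k ell : nat) (A : {set F})
  (sigma : pt F C -> center A) (X : {set F}) (phi : C -> F) :
  is_metric d ->
  (0 < #|A|)%N -> (#|A| <= ell)%N -> (k <= ell)%N ->
  closest_center d sigma ->
  ckm_optimal d u k X phi ->
  asg_cost d phi <= asg_cost (d_ell d sigma) phi /\
  asg_cost (d_ell d sigma) phi <= 3 * asg_cost d phi + 4 * costA d A.
Proof.
move=> d_metric _ _ _ sigma_closest _; split.
  by apply: ler_sum => c _; apply: le_d_ell.
rewrite /asg_cost /costA !mulr_sumr -big_split; apply: ler_sum => c _.
apply: le_trans (d_ell_le d_metric sigma_closest _ _) _.
by rewrite lerD2l ler_pM2l // center_dist_le_dist_to.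
Qed.
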